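(* Let $\mathcal A=(S,R)$ be an argumentation network with $S\neq\varnothing$, $R\subseteq S\times S$, which is finitary (every $y\in S$ has finitely many attackers). Write $\mathrm{Attack}(y)=\{z\mid zRy\}$ and regard the elements of $S$ as atoms of the logic $\mathbf{CN}$. Let $$\Delta_{\mathcal A}=\{x\mid x\in S,\ \neg\exists y\,(yRx)\}\cup\{y\leftrightarrow \textstyle\bigwedge_{z\in \mathrm{Attack}(y)}Nz\mid y\in S\}\cup\{z\to Ny\mid zRy\}\cup\{(\textstyle\bigwedge_{z\in\mathrm{Attack}(y)}\neg z)\wedge(\bigvee_{z\in\mathrm{Attack}(y)}\neg Nz)\to \neg y\wedge\neg Ny\mid y\in S\}$$ (empty conjunction is $\top$, empty disjunction is $\bot$). Then the $\mathbf{CN}$-models of $\Delta_{\mathcal A}$ correspond exactly to the complete extensions of $\mathcal A$: (i) for every $\mathbf{CN}$-model $h$ of $\Delta_{\mathcal A}$, the function $\lambda_h:S\to\{\mathrm{in},\mathrm{out},\mathrm{und}\}$ given by $\lambda_h(x)=\mathrm{in}$ if $h(x)=1$, $\lambda_h(x)=\mathrm{out}$ if $h(Nx)=1$, and $\lambda_h(x)=\mathrm{und}$ if $h(x)=h(Nx)=0$, is a well-defined legitimate Caminada labelling of $\mathcal A$; and (ii) for every legitimate Caminada labelling $\lambda$ of $\mathcal A$, the assignment $h_\lambda$ with $h_\lambda(x)=1$ iff $\lambda(x)=\mathrm{in}$ and $h_\lambda(Nx)=1$ iff $\lambda(x)=\mathrm{out}$ (for $x\in S$) is a $\mathbf{CN}$-model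 of $\Delta_{\mathcal A}$.
   Context: The logic $\mathbf{CN}$: atoms are $q$ and $Nq$ for $q$ in a set of basic atoms (here containing $S$); formulas are built with classical connectives; a $\mathbf{CN}$-model is a classical $\{0,1\}$-assignment $h$ to all atoms $q,Nq$ with $h(Nq)=1\Rightarrow h(q)=0$, with classical satisfaction; $\Delta\vdash_{\mathbf{CN}}A$ iff $\Delta\cup\{Nq\to\neg q\}\vdash A$ classically. A legitimate Caminada labelling of $(S,R)$ is a function $\lambda:S\to\{\mathrm{in},\mathrm{out},\mathrm{und}\}$ such that for all $x$: (C1) $\lambda(x)=\mathrm{in}$ iff every $y$ with $yRx$ has $\lambda(y)=\mathrm{out}$ (in particular if $x$ has no attackers); (C2) $\lambda(x)=\mathrm{out}$ iff some $y$ with $yRx$ has $\lambda(y)=\mathrm{in}$; (C3) $\lambda(x)=\mathrm{und}$ iff no attacker of $x$ is labelled in and some attacker of $x$ is labelled und. Complete extensions are the sets $\{x\mid\lambda(x)=\mathrm{in}\}$ for legitimate labellings $\lambda$, and this gives a bijection between legitimate labellings and complete extensions. *)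

From Stdlib Require Import List Bool.
Import ListNotations.
Set Implicit Arguments.

(* Atoms of CN: q and Nq for q a basic atom (here the basic atoms are the elements of S). *)
Inductive atom (S : Type) : Type :=
| APos : S -> atom S
| ANeg : S -> atom S.

Inductive form (S : Type) : Type :=
| FAtom : atom S -> form S
| FTop : form S
| FBot : form S
| FNot : form S -> form S
| FAnd : form S -> form S -> form S
| FOr  : form S -> form S -> form S
| FImp : form S -> form S -> form S
| FIff : form S -> form S -> form S.

Arguments FTop {S}.
Arguments FBot {S}.

Definition Pos {S} (x : S) : form S := FAtom (APos x).
Definition Nat {S} (x : S) : form S := FAtom (ANeg x).

Definition bigAnd {S} (l : list (form S)) : form S := fold_right (@FAnd S) FTop l.
Definition bigOr  {S} (l : list (form S)) : form S := fold_right (@FOr S) FBot l.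

Fixpoint sat {S} (h : atom S -> bool) (A : form S) : bool :=
  match A with
  | FAtom a => h a
  | FTop => true
  | FBot => false
  | FNot B => negb (sat h B)
  | FAnd B C => sat h B && sat h C
  | FOr B C => sat h B || sat h C
  | FImp B C => implb (sat h B) (sat h C)
  | FIff B C => eqb (sat h B) (sat h C)
  end.

Definition CN_model {S} (h : atom S -> bool) : Prop :=
  forall q, h (ANeg q) = true -> h (APos q) = false.

Definition CN_model_of {S} (h : atom S -> bool) (Delta : form S -> Prop) : Prop :=
  CN_model h /\ forall A, Delta A -> sat h A = true.

(* Argumentation network (S, R): R z y means z attacks y. *)
Definition finitary {S} (R : S -> S -> Prop) : Prop :=
  forall y : S, exists l : list S, forall z, R z y <-> In z l.

Definition enumerates_attackers {S} (R : S -> S -> Prop) (y : S) (l : list S) : Prop :=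
  forall z, R z y <-> In z l.

(* The theory Delta_A.  Conjunctions/disjunctions over Attack(y) are built from
   any list enumerating Attack(y) (finite by finitarity). *)
Inductive Delta {S} (R : S -> S -> Prop) : form S -> Prop :=
| D_unattacked : forall x, (forall y, ~ R y x) -> Delta R (Pos x)
| D_iff : forall y l, enumerates_attackers R y l ->
    Delta R (FIff (Pos y) (bigAnd (map Nat l)))
| D_attack : forall z y, R z y -> Delta R (FImp (Pos z) (Nat y))
| D_und : forall y l, enumerates_attackers R y l ->
    Delta R (FImp (FAnd (bigAnd (map (fun z => FNot (Pos z)) l))
                        (bigOr (map (fun z => FNot (Nat z)) l)))
                  (FAnd (FNot (Pos y)) (FNot (Nat y)))).

Inductive label : Type := lin | lout | lund.

Definition legitimate {S} (R : S -> S -> Prop) (lam : S -> label) : Prop :=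
  forall x,
    (lam x = lin <-> forall y, R y x -> lam y = lout) /\
    (lam x = lout <-> exists y, R y x /\ lam y = lin) /\
    (lam x = lund <-> (forall y, R y x -> lam y <> lin) /\
                      (exists y, R y x /\ lam y = lund)).

Definition lambda_of {S} (h : atom S -> bool) (x : S) : label :=
  if h (APos x) then lin else if h (ANeg x) then lout else lund.

Definition h_of {S} (lam : S -> label) (a : atom S) : bool :=
  match a with
  | APos x => match lam x with lin => true | _ => false end
  | ANeg x => match lam x with lout => true | _ => false end
  end.

(** The biconditional of [Delta] is the
    [in]-clause of a Caminada labelling, the attack implications give one half
    of the [out]-clause and the [und]-implications the other half.  The
    [und]-clause is then automatic: a three-valued labelling satisfying the
    [in]- and [out]-clauses is legitimate.  Conversely every formula of
    [Delta] evaluates under [h_lam] to an instance of a labelling clause. *)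
From Stdlib Require Import List Bool Classical.

Set Implicit Arguments.

Lemma sat_bigAnd_map {S T} (h : atom S -> bool) (f : T -> form S) (l : list T) :
  sat h (bigAnd (map f l)) = forallb (fun z => sat h (f z)) l.
Proof. induction l as [|z l IH]; simpl; [reflexivity | now rewrite IH]. Qed.

Lemma sat_bigOr_map {S T} (h : atom S -> bool) (f : T -> form S) (l : list T) :
  sat h (bigOr (map f l)) = existsb (fun z => sat h (f z)) l.
Proof. induction l as [|z l IH]; simpl; [reflexivity | now rewrite IH]. Qed.

Lemma legitimate_of_in_out {S} (R : S -> S -> Prop) (lam : S -> label) :
  (forall x, lam x = lin <-> forall y, R y x -> lam y = lout) ->
  (forall x, lam x = lout <-> exists y, R y x /\ lam y = lin) ->
  legitimate R lam.
Proof.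
  intros Hin Hout x. split; [exact (Hin x)|]. split; [exact (Hout x)|]. split.
  - intros Hund. split.
    + intros y Ry Hy.
      assert (lam x = lout) by (apply Hout; eauto). congruence.
    + apply NNPP. intros Hno.
      assert (Hx : lam x = lin).
      { apply Hin. intros y Ry. destruct (lam y) eqn:Ey; auto.
        - assert (lam x = lout) by (apply Hout; eauto). congruence.
        - exfalso. eauto. }
      congruence.
  - intros [Hnoin [y [Ry Hy]]]. destruct (lam x) eqn:Ex; auto.
    + apply Hin with (y := y) in Ex; congruence.
    + apply Hout in Ex as [z [Rz Hz]]. exfalso. eapply Hnoin; eauto.
Qed.

Section ModelLabelling.

Variables (S : Type) (R : S -> S -> Prop) (h : atom S -> bool).
Hypothesis Hh : CN_model_of h (Delta R).

Lemma model_not_pos_and_neg (x : S) :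
  ~ (h (APos x) = true /\ h (ANeg x) = true).
Proof. intros [Hp Hn]. apply (proj1 Hh) in Hn. congruence. Qed.

Lemma model_pos_iff (y : S) (l : list S) : enumerates_attackers R y l ->
  h (APos y) = true <-> forall z, R z y -> h (ANeg z) = true.
Proof.
  intros El. pose proof (proj2 Hh _ (D_iff El)) as H. simpl in H.
  rewrite sat_bigAnd_map in H. apply eqb_prop in H. simpl in H.
  rewrite H, forallb_forall.
  split; intros G z Hz; apply G, El; exact Hz.
Qed.

Lemma model_attack (z y : S) : R z y -> h (APos z) = true -> h (ANeg y) = true.
Proof.
  intros Rzy Hz. pose proof (proj2 Hh _ (D_attack R z y Rzy)) as H. simpl in H.
  now rewrite Hz in H.
Qed.

Lemma model_und (y : S) (l : list S) : enumerates_attackers R y l ->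
  (forall z, R z y -> h (APos z) = false) ->
  (exists z, R z y /\ h (ANeg z) = false) ->
  h (ANeg y) = false.
Proof.
  intros El Hpos [z [Rzy Hz]].
  pose proof (proj2 Hh _ (D_und El)) as H. simpl in H.
  rewrite sat_bigAnd_map, sat_bigOr_map in H. simpl in H.
  assert (E1 : forallb (fun w => negb (h (APos w))) l = true).
  { apply forallb_forall. intros w Hw. apply El in Hw. now rewrite Hpos. }
  assert (E2 : existsb (fun w => negb (h (ANeg w))) l = true).
  { apply existsb_exists. exists z. split; [now apply El | now rewrite Hz]. }
  rewrite E1, E2 in H. now destruct (h (APos y)), (h (ANeg y)).
Qed.

Lemma lambda_of_lin (x : S) : lambda_of h x = lin <-> h (APos x) = true.
Proof. unfold lambda_of. destruct (h (APos x)), (h (ANeg x)); intuition congruence. Qed.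

Lemma lambda_of_lout (x : S) :
  lambda_of h x = lout <-> h (APos x) = false /\ h (ANeg x) = true.
Proof. unfold lambda_of. destruct (h (APos x)), (h (ANeg x)); intuition congruence. Qed.

Hypothesis Hfin : finitary R.

Lemma lambda_of_in_clause (x : S) :
  lambda_of h x = lin <-> forall y, R y x -> lambda_of h y = lout.
Proof.
  destruct (Hfin x) as [l El].
  rewrite lambda_of_lin, (model_pos_iff El).
  split; intros G y Ry; specialize (G y Ry).
  - apply lambda_of_lout. split; [|exact G].
    destruct (h (APos y)) eqn:E; auto. exfalso. exact (model_not_pos_and_neg (conj E G)).
  - now apply lambda_of_lout in G.
Qed.

Lemma lambda_of_out_clause (x : S) :
  lambda_of h x = lout <-> exists y, R y x /\ lambda_of h y = lin.
Proof.
  destruct (Hfin x) as [l El].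
  rewrite lambda_of_lout. split.
  - intros [Hp Hn]. apply NNPP. intros Hnoin.
    assert (Hpos : forall z, R z x -> h (APos z) = false).
    { intros z Rz. destruct (h (APos z)) eqn:E; auto.
      exfalso. apply Hnoin. exists z. now rewrite lambda_of_lin. }
    assert (Hneg : exists z, R z x /\ h (ANeg z) = false).
    { apply NNPP. intros Hall.
      assert (h (APos x) = true); [|congruence].
      apply (model_pos_iff El). intros z Rz.
      destruct (h (ANeg z)) eqn:E; auto. exfalso. eauto. }
    pose proof (model_und El Hpos Hneg). congruence.
  - intros [y [Ryx Hy]]. apply lambda_of_lin in Hy.
    split; [|exact (model_attack Ryx Hy)].
    destruct (h (APos x)) eqn:E; auto.
    exfalso. exact (model_not_pos_and_neg (conj E (model_attack Ryx Hy))).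
Qed.

Lemma lambda_of_legitimate : legitimate R (lambda_of h).
Proof.
  apply legitimate_of_in_out.
  - exact lambda_of_in_clause.
  - exact lambda_of_out_clause.
Qed.

End ModelLabelling.

Section LabellingModel.

Variables (S : Type) (R : S -> S -> Prop) (lam : S -> label).
Hypothesis Hlam : legitimate R lam.

Lemma h_of_CN_model : CN_model (h_of lam).
Proof. intros q. simpl. destruct (lam q); congruence. Qed.

Lemma h_of_all_out (l : list S) :
  forallb (fun z => h_of lam (ANeg z)) l = true <-> forall z, In z l -> lam z = lout.
Proof.
  rewrite forallb_forall. simpl.
  split; intros G z Hz; specialize (G z Hz); destruct (lam z); congruence.
Qed.

Lemma h_of_sat_Delta (A : form S) : Delta R A -> sat (h_of lam) A = true.
Proof.
  intros HA. destruct HA as [x Hx | y l El | z y Rzy | y l El]; simpl.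
  - destruct (proj1 (Hlam x)) as [_ Hin]. rewrite Hin; auto.
    intros y Ry. exfalso. eapply Hx; eauto.
  - rewrite sat_bigAnd_map. simpl.
    assert (K : forallb (fun z => h_of lam (ANeg z)) l = true <-> lam y = lin).
    { rewrite h_of_all_out, (proj1 (Hlam y)).
      split; intros G z Hz; apply G, El; exact Hz. }
    simpl in K. apply eqb_true_iff, eq_true_iff_eq.
    destruct (lam y); intuition congruence.
  - destruct (lam z) eqn:Ez; auto. simpl.
    destruct (proj1 (proj2 (Hlam y))) as [_ Hout]. rewrite Hout; eauto.
  - rewrite sat_bigAnd_map, sat_bigOr_map. simpl.
    destruct (forallb _ l) eqn:F; simpl; auto.
    destruct (existsb _ l) eqn:G; simpl; auto.
    rewrite forallb_forall in F. apply existsb_exists in G as [w [Hw Gw]].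
    assert (Hund : lam y = lund).
    { apply (proj2 (proj2 (Hlam y))). split.
      - intros z Rz. apply El in Rz. specialize (F z Rz).
        destruct (lam z); simpl in F; congruence.
      - exists w. split; [now apply El|]. specialize (F w Hw).
        destruct (lam w); simpl in *; congruence. }
    now rewrite Hund.
Qed.

End LabellingModel.

Theorem theorem5 (S : Type) (R : S -> S -> Prop)
  (HS : inhabited S) (Hfin : finitary R) :
  (forall h : atom S -> bool, CN_model_of h (Delta R) ->
     (forall x, ~ (h (APos x) = true /\ h (ANeg x) = true)) /\
     legitimate R (lambda_of h)) /\
  (forall lam : S -> label, legitimate R lam ->
     CN_model_of (h_of lam) (Delta R)).
Proof.
  split.
  - intros h Hh. split.
    + intros x. apply (model_not_pos_and_neg Hh).
    + exact (lambda_of_legitimate Hh Hfin).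
  - intros lam Hlam. split.
    + exact (h_of_CN_model lam).
    + exact (h_of_sat_Delta Hlam).
Qed.
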